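(* Let $(\beta,\gamma)$ be antiferromagnetic and $\lambda>0$. Suppose $\mathcal{T}_1,\dots,\mathcal{T}_k$ are rooted trees with roots $\rho_1,\dots,\rho_k$, effective fields $R_1,\dots,R_k$ and magnetization gaps $M_1,\dots,M_k$. Let $\mathcal{T}$ be the tree with root $\rho$, consisting of an edge $\{\rho,u\}$ together with $\mathcal{T}_1,\dots,\mathcal{T}_k$, where the roots $\rho_1,\dots,\rho_k$ are all identified with $u$. Let $R,M$ be the effective field and magnetization gap of $\mathcal{T}$. Then $$R=\frac{1+\gamma\lambda\prod_{i=1}^kR_i}{\beta+\lambda\prod_{i=1}^kR_i},\qquad M=1-\omega(R)\Big(1+\sum_{i=1}^k(M_i-1)\Big),\qquad\text{where }\ \omega(R):=\frac{1+\beta\gamma-\beta R-\gamma/R}{1-\beta\gamma}.$$ Moreover $R\in(\gamma,1/\beta)$ and $0<\omega(R)<1$.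
   Context: A pair $(\beta,\gamma)$ with $\beta,\gamma\geq0$ is antiferromagnetic if $\beta\gamma\in[0,1)$ and at least one is nonzero. For a graph $G=(V,E)$ and $\lambda>0$, $\mu_{G;\beta,\gamma,\lambda}(\sigma)=\lambda^{|\sigma|}\beta^{m_0(\sigma)}\gamma^{m_1(\sigma)}/Z$ for $\sigma:V\to\{0,1\}$, $|\sigma|=\sum_v\sigma(v)$, $m_0,m_1$ the numbers of edges with both endpoints spin $0$, resp. spin $1$, convention $0^0=1$. For a rooted tree $\mathcal{T}$ with root $\rho$ and $\mu=\mu_{\mathcal{T};\beta,\gamma,\lambda}$, the effective field is $R_{\mathcal{T}}=\frac{1}{\lambda}\frac{\mu(\sigma(\rho)=1)}{\mu(\sigma(\rho)=0)}$ and the magnetization gap is $M_{\mathcal{T}}=\mathbf{E}_\mu[|\sigma|\mid\sigma(\rho)=1]-\mathbf{E}_\mu[|\sigma|\mid\sigma(\rho)=0]$ (counting all vertices including the root). When $\beta=0$, $1/\beta$ is interpreted as $+\infty$. *)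

From HB Require Import structures.
From mathcomp Require Import all_boot all_order all_algebra.
Set Implicit Arguments. Unset Strict Implicit. Unset Printing Implicit Defensive.
Import Order.TTheory GRing.Theory Num.Theory.
Local Open Scope ring_scope.

Inductive rtree : Type := Node of seq rtree.

Definition children (t : rtree) : seq rtree := let: Node cs := t in cs.

Fixpoint tsize (t : rtree) : nat :=
  let: Node cs := t in (sumn (map tsize cs)).+1.

(* Vertices are numbered 0 .. tsize t - 1 in preorder; the root is 0.
   Edge list (parent, child) of the tree. *)
Fixpoint tedges (t : rtree) : seq (nat * nat) :=
  let: Node cs := t in
  let fix go (cs : seq rtree) (off : nat) : seq (nat * nat) :=
    match cs with
    | [::] => [::]
    | c :: cs' =>
        (0%N, off) :: map (fun e => (e.1 + off, e.2 + off)%N) (tedges c)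
                   ++ go cs' (off + tsize c)%N
    end in
  go cs 1%N.

Section Gibbs.
Variable R : realFieldType.
Variables (beta gamma lam : R).

Definition antiferro : Prop :=
  0 <= beta /\ 0 <= gamma /\ beta * gamma < 1 /\ (beta != 0 \/ gamma != 0).

Variable t : rtree.
Notation n := (tsize t).
Notation conf := (n.-tuple bool).

Definition spin (s : conf) (i : nat) : bool := nth false s i.

Definition nspins (s : conf) : nat := count id s.
Definition m0 (s : conf) : nat :=
  count (fun e : nat * nat => ~~ spin s e.1 && ~~ spin s e.2) (tedges t).
Definition m1 (s : conf) : nat :=
  count (fun e : nat * nat => spin s e.1 && spin s e.2) (tedges t).

Definition gweight (s : conf) : R :=
  lam ^+ nspins s * beta ^+ m0 s * gamma ^+ m1 s.

Definition Zpart : R := \sum_(s : conf) gweight s.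

Definition gibbs (s : conf) : R := gweight s / Zpart.

Definition root_prob (b : bool) : R :=
  \sum_(s : conf | spin s 0 == b) gibbs s.

Definition cond_mag (b : bool) : R :=
  (\sum_(s : conf | spin s 0 == b) (nspins s)%:R * gibbs s) / root_prob b.

Definition eff_field : R := lam^-1 * (root_prob true / root_prob false).

Definition mag_gap : R := cond_mag true - cond_mag false.

End Gibbs.

Definition omega (R : realFieldType) (beta gamma x : R) : R :=
  (1 + beta * gamma - beta * x - gamma / x) / (1 - beta * gamma).

(* Conditioning on the spin b of the root, the partition function of a tree
   factors over the subtrees of the root: Z(b) = lam^b * prod_c Z_c^edge(b),
   where Z_c^edge(b) = sum_b' w(b, b') Z_c(b') with w(1,1) = gamma,
   w(0,0) = beta and w = 1 otherwise; differentiating in lam, the conditional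
   magnetisation is b + sum_c W_c^edge(b) / Z_c^edge(b).  Hence gluing the
   roots of T_1, ..., T_k into one vertex u multiplies effective fields and adds
   the gaps M_i - 1.  Hanging u below a new root maps y = lam * R_u to
   (1 + gamma y) / (beta + y), and the gap of the new tree is 1 - omega * M_u with
   omega = y (1 - beta gamma) / ((1 + gamma y) (beta + y)), which lies in (0, 1)
   since the denominator exceeds the numerator by beta + 2 beta gamma y + gamma y^2. *)

From Pilot Require Import Defs.
From HB Require Import structures.
From mathcomp Require Import all_boot all_order all_algebra zify ring lra.
Import Order.TTheory GRing.Theory Num.Theory.
Import Defs. (* otherwise [tsize] of [tuple] shadows [Defs.tsize] *)
Local Open Scope ring_scope.
Set Implicit Arguments. Unset Strict Implicit. Unset Printing Implicit Defensive.

Section EdgeStep.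
Variables (R : realFieldType) (beta gamma : R).
Hypotheses (beta_ge0 : 0 <= beta) (gamma_ge0 : 0 <= gamma) (beta_gamma_lt1 : beta * gamma < 1).

Definition edge_step (y : R) : R := (1 + gamma * y) / (beta + y).

Section PositiveArgument.
Variable y : R.
Hypothesis y_gt0 : 0 < y.

Let one_sub_gt0 : 0 < 1 - beta * gamma. Proof. by rewrite subr_gt0. Qed.
Let beta_add_gt0 : 0 < beta + y. Proof. by rewrite ltr_wpDl. Qed.
Let one_add_gt0 : 0 < 1 + gamma * y.
Proof. by rewrite ltr_wpDr ?ltr01 // mulr_ge0 // ltW. Qed.

Lemma omega_edge_step :
  omega beta gamma (edge_step y) = y * (1 - beta * gamma) / ((1 + gamma * y) * (beta + y)).
Proof.
rewrite /omega /edge_step; field.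
by rewrite !lt0r_neq0.
Qed.

Lemma gamma_lt_edge_step : gamma < edge_step y.
Proof.
have -> : edge_step y = gamma + (1 - beta * gamma) / (beta + y).
  by rewrite /edge_step; field; rewrite lt0r_neq0.
by rewrite ltrDl divr_gt0.
Qed.

Lemma edge_step_lt_inv : 0 < beta -> edge_step y < beta^-1.
Proof.
move=> beta_gt0; have -> : beta^-1 = edge_step y + y * (1 - beta * gamma) / (beta * (beta + y)).
  by rewrite /edge_step; field; rewrite !lt0r_neq0.
by rewrite ltrDl divr_gt0 ?mulr_gt0.
Qed.

Lemma omega_edge_step_gt0 : 0 < omega beta gamma (edge_step y).
Proof. by rewrite omega_edge_step divr_gt0 ?mulr_gt0. Qed.

Lemma omega_edge_step_lt1 : beta != 0 \/ gamma != 0 -> omega beta gamma (edge_step y) < 1.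
Proof.
move=> beta_gamma_neq0.
rewrite omega_edge_step ltr_pdivrMr ?mulr_gt0 // mul1r.
have slack_gt0 : 0 < beta + gamma * y * y.
  case: beta_gamma_neq0 => [beta_neq0 | gamma_neq0].
    have beta_gt0 : 0 < beta by rewrite lt0r beta_neq0.
    exact: ltr_wpDr (mulr_ge0 (mulr_ge0 gamma_ge0 (ltW y_gt0)) (ltW y_gt0)) beta_gt0.
  have gamma_gt0 : 0 < gamma by rewrite lt0r gamma_neq0.
  exact: ltr_wpDl beta_ge0 (mulr_gt0 (mulr_gt0 gamma_gt0 y_gt0) y_gt0).
have := mulr_ge0 (mulr_ge0 beta_ge0 gamma_ge0) (ltW y_gt0).
lra.
Qed.

End PositiveArgument.

(* With [z_b], [w_b] the partition function and magnetisation sum of a subtree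
   with root spin [b], the left side is the gap contribution of the edge above it. *)
Lemma edge_step_gap z0 z1 w0 w1 : 0 < z0 -> 0 < z1 ->
  (gamma * w1 + w0) / (gamma * z1 + z0) - (w1 + beta * w0) / (z1 + beta * z0) =
  - (omega beta gamma (edge_step (z1 / z0)) * (w1 / z1 - w0 / z0)).
Proof.
move=> z0_gt0 z1_gt0.
have gz_gt0 : 0 < gamma * z1 + z0 := ltr_wpDl (mulr_ge0 gamma_ge0 (ltW z1_gt0)) z0_gt0.
have bz_gt0 : 0 < z1 + beta * z0 := ltr_wpDr (mulr_ge0 beta_ge0 (ltW z0_gt0)) z1_gt0.
rewrite omega_edge_step ?divr_gt0 //; field.
by rewrite (addrC (beta * z0)) (addrC z0) !lt0r_neq0.
Qed.

End EdgeStep.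

Section TupleSums.
Variable V : nmodType.

Lemma sum_tuple0 (F : seq bool -> V) : \sum_(s : 0.-tuple bool) F s = F [::].
Proof. by rewrite (big_pred1 [tuple]) // => s; rewrite [s]tuple0; apply/esym/eqP. Qed.

Lemma sum_tuple_cons n (F : seq bool -> V) :
  \sum_(s : n.+1.-tuple bool) F s = \sum_(b : bool) \sum_(s : n.-tuple bool) F (b :: s).
Proof.
rewrite pair_big /= (reindex (fun p : bool * n.-tuple bool => [tuple of p.1 :: p.2])) //.
exists (fun s : n.+1.-tuple bool => (thead s, [tuple of behead s])).
  by move=> [b s] _; congr pair; apply: val_inj.
by move=> s _; apply: val_inj; case: s => [[|x s]].
Qed.

Lemma sum_tuple_cat m n (F : seq bool -> V) :
  \sum_(s : (m + n).-tuple bool) F s =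
  \sum_(s1 : m.-tuple bool) \sum_(s2 : n.-tuple bool) F (s1 ++ s2).
Proof.
elim: m F => [|m IHm] F.
  by rewrite (sum_tuple0 (fun s1 => \sum_(s2 : n.-tuple bool) F (s1 ++ s2))).
rewrite addSn sum_tuple_cons.
rewrite (sum_tuple_cons m (fun s1 => \sum_(s2 : n.-tuple bool) F (s1 ++ s2))).
apply: eq_bigr => b _.
exact: (IHm (fun s => F (b :: s))).
Qed.

Lemma sum_tuple_head n b (F : seq bool -> V) :
  \sum_(s : n.+1.-tuple bool | nth false s 0 == b) F s =
  \sum_(s : n.-tuple bool) F (b :: s).
Proof.
rewrite big_mkcond (sum_tuple_cons n (fun s => if nth false s 0 == b then F s else 0)).
by rewrite big_bool; case: b; rewrite /= big1_eq ?addr0 ?add0r.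
Qed.

End TupleSums.

Fixpoint forest_edges (cs : seq rtree) (off : nat) : seq (nat * nat) :=
  if cs is c :: cs' then
    (0%N, off) :: map (fun e => (e.1 + off, e.2 + off)%N) (tedges c)
      ++ forest_edges cs' (off + tsize c)
  else [::].

Lemma tedges_Node cs : tedges (Node cs) = forest_edges cs 1.
Proof. by rewrite /=; elim: cs 1%N => //= c cs IHcs off; rewrite IHcs. Qed.

Fixpoint all_trees (P : rtree -> Prop) (cs : seq rtree) : Prop :=
  if cs is c :: cs' then P c /\ all_trees P cs' else True.

Fixpoint rtree_all_ind (P : rtree -> Prop)
    (IH : forall cs, all_trees P cs -> P (Node cs)) (t : rtree) : P t :=
  let: Node cs := t in
  IH cs ((fix all_P (cs : seq rtree) : all_trees P cs :=
            if cs is c :: cs' then conj (rtree_all_ind IH c) (all_P cs') else I) cs).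

Lemma tsize_gt0 t : (0 < tsize t)%N.
Proof. by case: t. Qed.

Lemma tedges_bound t :
  all (fun e => (e.1 < tsize t) && (e.2 < tsize t))%N (tedges t).
Proof.
elim/rtree_all_ind: t => cs IHcs; rewrite tedges_Node /= -add1n.
elim: cs IHcs 1%N => [|c cs IHcs] //= [IHc IHcs'] off.
have := tsize_gt0 c; rewrite all_cat all_map addnA => c_gt0.
apply/and3P; split; first by apply/andP; lia.
  by apply/allP => e /(allP IHc) /andP[] /=; lia.
exact: IHcs.
Qed.

Section PartitionFunctions.
Variables (R : realFieldType) (beta gamma lam : R).

Definition edge_weight (b b' : bool) : R :=
  if b == b' then (if b then gamma else beta) else 1.

Definition weight (t : rtree) (s : seq bool) : R :=
  lam ^+ count id s *
  \prod_(e <- tedges t) edge_weight (nth false s e.1) (nth false s e.2).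

Lemma prod_edge_weight (E : seq (nat * nat)) (s : seq bool) :
  \prod_(e <- E) edge_weight (nth false s e.1) (nth false s e.2) =
  beta ^+ count (fun e => ~~ nth false s e.1 && ~~ nth false s e.2) E *
  gamma ^+ count (fun e => nth false s e.1 && nth false s e.2) E.
Proof.
elim: E => [|e E IHE]; first by rewrite big_nil mulr1.
rewrite big_cons IHE /= !exprD.
by case: (nth false s e.1); case: (nth false s e.2); rewrite /edge_weight /=; ring.
Qed.

Lemma gweightE t (s : (tsize t).-tuple bool) : gweight beta gamma lam s = weight t s.
Proof. by rewrite /weight prod_edge_weight mulrA. Qed.

Fixpoint forest_weight (b : bool) (cs : seq rtree) (s : seq bool) : R :=
  if cs is c :: cs' then
    edge_weight b (nth false s 0) * weight c (take (tsize c) s) *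
    forest_weight b cs' (drop (tsize c) s)
  else 1.

Lemma weight_forest_edges cs off pre s :
  size pre = off -> (0 < off)%N -> size s = sumn (map tsize cs) ->
  lam ^+ count id s *
  \prod_(e <- forest_edges cs off)
     edge_weight (nth false (pre ++ s) e.1) (nth false (pre ++ s) e.2)
  = forest_weight (nth false pre 0) cs s.
Proof.
elim: cs off pre s => [|c cs IHcs] off pre s size_pre off_gt0 /=.
  by move/size0nil->; rewrite big_nil mulr1.
move=> size_s; have c_gt0 := tsize_gt0 c.
have in_c : \prod_(e <- tedges c) edge_weight (nth false (pre ++ s) (e.1 + off))
                                              (nth false (pre ++ s) (e.2 + off))
    = \prod_(e <- tedges c) edge_weight (nth false (take (tsize c) s) e.1)
                                        (nth false (take (tsize c) s) e.2).
  apply: eq_big_seq => e /(allP (tedges_bound c)) /andP[e1_lt e2_lt].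
  by rewrite !nth_cat size_pre !ltnNge !leq_addl /= !addnK !nth_take.
rewrite big_cons big_cat big_map /= in_c !nth_cat size_pre off_gt0 ltnn subnn.
have IH := IHcs (off + tsize c)%N (pre ++ take (tsize c) s) (drop (tsize c) s).
rewrite nth_cat size_pre off_gt0 -catA cat_take_drop in IH.
have count_s : count id s = (count id (take (tsize c) s) + count id (drop (tsize c) s))%N.
  by rewrite -count_cat cat_take_drop.
rewrite -IH; last 3 first.
- by rewrite size_cat size_takel ?size_pre // size_s; lia.
- by lia.
- by rewrite size_drop size_s; lia.
by rewrite count_s exprD /weight; ring.
Qed.

Lemma weight_Node b cs s :
  size s = sumn (map tsize cs) ->
  weight (Node cs) (b :: s) = lam ^+ b * forest_weight b cs s.
Proof.
move=> size_s; rewrite -(@weight_forest_edges cs 1 [:: b]) // /weight.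
by rewrite tedges_Node /= exprD; ring.
Qed.

(* [Zroot t b] and [Wroot t b] are the partition function of [t] and its
   [|sigma|]-weighted version, restricted to root spin [b]; [Zedge t b] and
   [Wedge t b] are the same sums for [t] hanging by an edge below a vertex of
   spin [b] (that vertex itself not counted). *)
Definition Zroot (t : rtree) (b : bool) : R :=
  \sum_(s : (tsize t).-tuple bool | nth false s 0 == b) weight t s.

Definition Wroot (t : rtree) (b : bool) : R :=
  \sum_(s : (tsize t).-tuple bool | nth false s 0 == b) (count id s)%:R * weight t s.

Definition Zedge (t : rtree) (b : bool) : R :=
  \sum_(b' : bool) edge_weight b b' * Zroot t b'.

Definition Wedge (t : rtree) (b : bool) : R :=
  \sum_(b' : bool) edge_weight b b' * Wroot t b'.

Lemma sum_edge_weight t b (G : seq bool -> R) :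
  \sum_(s : (tsize t).-tuple bool) edge_weight b (nth false s 0) * G s =
  \sum_(b' : bool) edge_weight b b' * \sum_(s : (tsize t).-tuple bool | nth false s 0 == b') G s.
Proof.
case: t => cs; rewrite (sum_tuple_cons _ (fun s => edge_weight b (nth false s 0) * G s)).
by apply: eq_bigr => b' _; rewrite sum_tuple_head mulr_sumr.
Qed.

Lemma Zedge_sum t b :
  Zedge t b = \sum_(s : (tsize t).-tuple bool) edge_weight b (nth false s 0) * weight t s.
Proof. by rewrite (sum_edge_weight _ _ (weight t)). Qed.

Lemma Wedge_sum t b :
  Wedge t b = \sum_(s : (tsize t).-tuple bool)
                edge_weight b (nth false s 0) * ((count id s)%:R * weight t s).
Proof. by rewrite (sum_edge_weight _ _ (fun s => (count id s)%:R * weight t s)). Qed.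

Lemma forest_weight_cat b c cs s1 s2 :
  size s1 = tsize c ->
  forest_weight b (c :: cs) (s1 ++ s2) =
  edge_weight b (nth false s1 0) * weight c s1 * forest_weight b cs s2.
Proof.
move=> size_s1 /=.
by rewrite nth_cat size_s1 tsize_gt0 -size_s1 take_size_cat // drop_size_cat.
Qed.

Lemma sum_forest_weight b cs :
  \sum_(s : (sumn (map tsize cs)).-tuple bool) forest_weight b cs s =
  \prod_(c <- cs) Zedge c b.
Proof.
elim: cs => [|c cs IHcs]; first by rewrite big_nil (sum_tuple0 (forest_weight b [::])).
rewrite /= (sum_tuple_cat _ _ (forest_weight b (c :: cs))) big_cons -IHcs Zedge_sum.
rewrite mulr_suml; apply: eq_bigr => s1 _; rewrite mulr_sumr; apply: eq_bigr => s2 _.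
by rewrite forest_weight_cat // size_tuple.
Qed.

Lemma Zroot_Node cs b :
  Zroot (Node cs) b = lam ^+ b * \prod_(c <- cs) Zedge c b.
Proof.
rewrite /Zroot (sum_tuple_head _ _ (weight (Node cs))) -sum_forest_weight mulr_sumr.
by apply: eq_bigr => s _; rewrite weight_Node // size_tuple.
Qed.

Lemma Zpart_split t : Zpart beta gamma lam t = Zroot t true + Zroot t false.
Proof.
rewrite /Zpart (bigID (fun s : (tsize t).-tuple bool => nth false s 0 == true)) /=.
by congr (_ + _); apply: eq_big => [s|s _]; rewrite ?gweightE //; case: (nth false s 0).
Qed.

Lemma root_probE t b : root_prob beta gamma lam t b = Zroot t b / Zpart beta gamma lam t.
Proof. by rewrite /root_prob /Zroot mulr_suml; apply: eq_bigr => s _; rewrite /gibbs gweightE. Qed.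

Section Positivity.
Hypotheses (beta_ge0 : 0 <= beta) (gamma_ge0 : 0 <= gamma) (lam_gt0 : 0 < lam).
Hypothesis beta_gamma_lt1 : beta * gamma < 1.

Lemma edge_sum_gt0 b (x : bool -> R) :
  (forall b', 0 < x b') -> 0 < \sum_(b' : bool) edge_weight b b' * x b'.
Proof.
move=> x_gt0; have x_ge0 b' := ltW (x_gt0 b').
rewrite big_bool /edge_weight; case: b => /=; rewrite mul1r.
  by rewrite ltr_wpDl ?mulr_ge0.
by rewrite ltr_wpDr ?mulr_ge0.
Qed.

Lemma Zroot_gt0 t b : 0 < Zroot t b.
Proof.
elim/rtree_all_ind: t b => cs IHcs b.
rewrite Zroot_Node mulr_gt0 ?exprn_gt0 //.
elim: cs IHcs => [_|c cs IHcs [IHc IHcs']]; first by rewrite big_nil ltr01.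
by rewrite big_cons mulr_gt0 ?IHcs ?edge_sum_gt0.
Qed.

Lemma Zedge_gt0 t b : 0 < Zedge t b.
Proof. exact/edge_sum_gt0/Zroot_gt0. Qed.

Lemma sum_count_forest_weight b cs :
  \sum_(s : (sumn (map tsize cs)).-tuple bool) (count id s)%:R * forest_weight b cs s =
  (\prod_(c <- cs) Zedge c b) * \sum_(c <- cs) Wedge c b / Zedge c b.
Proof.
elim: cs => [|c cs IHcs].
  by rewrite (sum_tuple0 (fun s => (count id s)%:R * forest_weight b [::] s)) !big_nil mul0r mulr0.
rewrite /= (sum_tuple_cat _ _ (fun s => (count id s)%:R * forest_weight b (c :: cs) s)).
have split_count : \sum_(s1 : (tsize c).-tuple bool) \sum_(s2 : (sumn (map tsize cs)).-tuple bool)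
     (count id (s1 ++ s2))%:R * forest_weight b (c :: cs) (s1 ++ s2) =
   Wedge c b * \sum_(s2 : (sumn (map tsize cs)).-tuple bool) forest_weight b cs s2 +
   Zedge c b * \sum_(s2 : (sumn (map tsize cs)).-tuple bool) (count id s2)%:R * forest_weight b cs s2.
  rewrite Wedge_sum Zedge_sum !mulr_suml -big_split; apply: eq_bigr => s1 _.
  rewrite !mulr_sumr -big_split; apply: eq_bigr => s2 _.
  by rewrite forest_weight_cat ?size_tuple // count_cat natrD /=; ring.
have Zc_neq0 := lt0r_neq0 (Zedge_gt0 c b).
by rewrite split_count IHcs sum_forest_weight !big_cons; field.
Qed.

Lemma Wroot_Node cs b :
  Wroot (Node cs) b = (b%:R + \sum_(c <- cs) Wedge c b / Zedge c b) * Zroot (Node cs) b.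
Proof.
rewrite mulrC Zroot_Node -mulrA mulrDr -sum_count_forest_weight -sum_forest_weight.
rewrite /Wroot (sum_tuple_head _ _ (fun s => (count id s)%:R * weight (Node cs) s)).
rewrite mulr_suml -big_split mulr_sumr; apply: eq_bigr => s _.
by rewrite weight_Node ?size_tuple //= natrD; ring.
Qed.

Lemma Zpart_gt0 t : 0 < Zpart beta gamma lam t.
Proof. by rewrite Zpart_split addr_gt0 ?Zroot_gt0. Qed.

Lemma cond_magE t b : cond_mag beta gamma lam t b = Wroot t b / Zroot t b.
Proof.
have Zpart_neq0 := lt0r_neq0 (Zpart_gt0 t).
have Zroot_neq0 := lt0r_neq0 (Zroot_gt0 t b).
rewrite /cond_mag root_probE.
have -> : \sum_(s : (tsize t).-tuple bool | spin s 0 == b)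
            (nspins s)%:R * gibbs beta gamma lam s = Wroot t b / Zpart beta gamma lam t.
  by rewrite /Wroot mulr_suml; apply: eq_bigr => s _; rewrite /gibbs gweightE mulrA.
by field; rewrite Zpart_neq0 Zroot_neq0.
Qed.

Lemma eff_fieldE t : eff_field beta gamma lam t = lam^-1 * (Zroot t true / Zroot t false).
Proof.
have Zpart_neq0 := lt0r_neq0 (Zpart_gt0 t).
by rewrite /eff_field !root_probE -mulf_div divff ?invr_neq0 // mulr1.
Qed.

Lemma eff_field_gt0 t : 0 < eff_field beta gamma lam t.
Proof. by rewrite eff_fieldE mulr_gt0 ?invr_gt0 ?divr_gt0 ?Zroot_gt0. Qed.

Lemma mag_gapE t :
  mag_gap beta gamma lam t = Wroot t true / Zroot t true - Wroot t false / Zroot t false.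
Proof. by rewrite /mag_gap !cond_magE. Qed.

Lemma eff_field_Node cs :
  eff_field beta gamma lam (Node cs) = \prod_(c <- cs) (Zedge c true / Zedge c false).
Proof.
by rewrite eff_fieldE !Zroot_Node expr1 expr0 mul1r -mulrA mulKf ?lt0r_neq0 // prodf_div.
Qed.

Lemma mag_gap_Node cs :
  mag_gap beta gamma lam (Node cs) =
  1 + \sum_(c <- cs) (Wedge c true / Zedge c true - Wedge c false / Zedge c false).
Proof.
rewrite mag_gapE !Wroot_Node !mulfK ?lt0r_neq0 ?Zroot_gt0 //.
by rewrite big_split sumrN /= add0r addrA.
Qed.

Lemma eff_field_flatten Ts :
  eff_field beta gamma lam (Node (flatten (map children Ts))) =
  \prod_(T <- Ts) eff_field beta gamma lam T.
Proof.
rewrite eff_field_Node big_flatten big_map.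
by apply: eq_bigr => -[cs] _; rewrite eff_field_Node.
Qed.

Lemma mag_gap_flatten Ts :
  mag_gap beta gamma lam (Node (flatten (map children Ts))) =
  1 + \sum_(T <- Ts) (mag_gap beta gamma lam T - 1).
Proof.
rewrite mag_gap_Node big_flatten big_map; congr (1 + _).
by apply: eq_bigr => -[cs] _; rewrite mag_gap_Node addrC addKr.
Qed.

Lemma lam_eff_field t : lam * eff_field beta gamma lam t = Zroot t true / Zroot t false.
Proof. by rewrite eff_fieldE mulVKf ?lt0r_neq0. Qed.

Lemma eff_field_edge t :
  eff_field beta gamma lam (Node [:: t]) = edge_step beta gamma (lam * eff_field beta gamma lam t).
Proof.
rewrite eff_field_Node big_seq1 /Zedge !big_bool /edge_weight /= !mul1r lam_eff_field /edge_step.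
have [Z0_gt0 Z1_gt0] := (Zroot_gt0 t false, Zroot_gt0 t true).
have denom_gt0 := ltr_wpDl (mulr_ge0 beta_ge0 (ltW Z0_gt0)) Z1_gt0.
by field; rewrite !lt0r_neq0.
Qed.

Lemma mag_gap_edge t :
  mag_gap beta gamma lam (Node [:: t]) =
  1 - omega beta gamma (eff_field beta gamma lam (Node [:: t])) * mag_gap beta gamma lam t.
Proof.
rewrite mag_gap_Node big_seq1 /Wedge /Zedge !big_bool /edge_weight /= !mul1r.
by rewrite edge_step_gap ?Zroot_gt0 // eff_field_edge lam_eff_field mag_gapE.
Qed.

End Positivity.

End PartitionFunctions.

Theorem lemma3p1 (R : realFieldType) (beta gamma lam : R) (Ts : seq rtree) :
  antiferro beta gamma -> 0 < lam ->
  let T := Node [:: Node (flatten (map children Ts))] in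
  let RT := eff_field beta gamma lam T in
  let MT := mag_gap beta gamma lam T in
  [/\ RT = (1 + gamma * lam * \prod_(Ti <- Ts) eff_field beta gamma lam Ti)
           / (beta + lam * \prod_(Ti <- Ts) eff_field beta gamma lam Ti),
      MT = 1 - omega beta gamma RT
               * (1 + \sum_(Ti <- Ts) (mag_gap beta gamma lam Ti - 1)),
      gamma < RT /\ (beta = 0 \/ RT < beta^-1)
    & 0 < omega beta gamma RT < 1].
Proof.
move=> [beta_ge0 [gamma_ge0 [beta_gamma_lt1 beta_gamma_neq0]]] lam_gt0 T RT MT.
set U := Node (flatten (map children Ts)).
have y_gt0 : 0 < lam * eff_field beta gamma lam U by rewrite mulr_gt0 ?eff_field_gt0.
have RTE : RT = edge_step beta gamma (lam * eff_field beta gamma lam U).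
  exact: eff_field_edge.
split.
- by rewrite RTE eff_field_flatten // /edge_step mulrA.
- by rewrite /MT mag_gap_edge // -/RT mag_gap_flatten.
- split; first by rewrite RTE gamma_lt_edge_step.
  have [-> | beta_neq0] := eqVneq beta 0; [by left | right].
  by rewrite RTE edge_step_lt_inv // lt0r beta_neq0.
- by rewrite RTE omega_edge_step_gt0 ?omega_edge_step_lt1.
Qed.
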